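(* For $n\ge1$ let $u_n=\frac{1}{2n}\left(1-\frac{1}{2n}\right)^{2n-1}$ and $v_n=\frac{1}{2n+1}\left(1-\frac{1}{2n+1}\right)^{2n+1}$. Then for all $n\ge1$, $$\sum_{i=1}^n (2i-1)^{2i-1}u_n^{2i-1}<1\qquad\text{and}\qquad \sum_{i=1}^n (2i)^{2i+1}v_n^{2i-1}<1.$$ *)

From mathcomp Require Import all_boot all_order all_algebra.
Set Implicit Arguments. Unset Strict Implicit. Unset Printing Implicit Defensive.
Import Order.TTheory GRing.Theory Num.Theory.
Local Open Scope ring_scope.

Definition u_seq (R : realFieldType) (n : nat) : R :=
  ((2 * n)%:R)^-1 * (1 - ((2 * n)%:R)^-1) ^+ (2 * n).-1.

Definition v_seq (R : realFieldType) (n : nat) : R :=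
  ((2 * n).+1%:R)^-1 * (1 - ((2 * n).+1%:R)^-1) ^+ (2 * n).+1.

From mathcomp Require Import all_boot all_order all_algebra.
From mathcomp Require Import ring lra zify.
Import Order.TTheory GRing.Theory Num.Theory.
Local Open Scope ring_scope.
Set Implicit Arguments. Unset Strict Implicit.

(* Both inequalities rest on the elementary bound (1 - 1/m)^m <= 1/c, which
   follows from (1 - 1/m)^m (1 + 1/m)^m <= 1 and a second-order Bernoulli
   lower bound c <= (1 + 1/m)^m; we use c = 2 (m >= 1) and c = 12/5 (m >= 5).
   - u-sum: for i <= n, (2i-1) u_n <= (2n-1) u_n = (1 - 1/(2n))^(2n) <= 1/2,
     so the i-th term is at most (1/2)^(2i-1) <= (1/2)^i, and the geometric
     sum 1 - (1/2)^n is < 1.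
   - v-sum: with p = 2n+1 we get v_n <= a/p, a = 5/12, when n >= 2.  Since
     2i <= p, the i-th term is at most b_i / p with b_i = (2i)^3 a^(2i-1).
     The b_i decrease geometrically (ratio <= 1/3 from i = 5 on), which gives
     sum b_i <= 62/5 < p for n >= 6.  The cases n <= 5 are checked by
     bounding v_n by an explicit rational and evaluating the sum. *)

Section Bernoulli.
Variable R : realFieldType.

Lemma bernoulli2 (y : R) (k : nat) : 0 <= y ->
  1 + k%:R * y + (k%:R * (k%:R - 1) / 2) * y ^+ 2 <= (1 + y) ^+ k.
Proof.
move=> y_ge0; elim: k => [|k IH]; first by rewrite !mul0r !addr0 expr0.
rewrite [(1 + y) ^+ k.+1]exprS -natr1.
have kk_ge0 : 0 <= (k%:R : R) * (k%:R - 1).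
  case: k {IH} => [|k]; first by rewrite mul0r.
  rewrite -natr1; have k_ge0 : 0 <= (k%:R : R) by [].
  nra.
have cubic_ge0 : 0 <= (k%:R * (k%:R - 1) / 2) * y ^+ 2 * y.
  by rewrite mulr_ge0 // mulr_ge0 ?exprn_ge0 // divr_ge0.
have expand : (1 + y) * (1 + k%:R * y + (k%:R * (k%:R - 1) / 2) * y ^+ 2) =
    1 + (k%:R + 1) * y + ((k%:R + 1) * (k%:R + 1 - 1) / 2) * y ^+ 2
    + (k%:R * (k%:R - 1) / 2) * y ^+ 2 * y.
  by rewrite expr2; field.
have y1_ge0 : 0 <= 1 + y by lra.
have := ler_wpM2l y1_ge0 IH; rewrite expand; lra.
Qed.

Lemma one_add_inv_pow_ge (m : nat) : (1 <= m)%N ->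
  2 + (1 - (m%:R : R)^-1) / 2 <= (1 + (m%:R)^-1) ^+ m.
Proof.
move=> m_ge1; have m_gt0 : (0 : R) < m%:R by rewrite ltr0n.
have inv_ge0 : 0 <= (m%:R : R)^-1 by rewrite invr_ge0 ltW.
have := bernoulli2 m inv_ge0.
have -> : m%:R * (m%:R - 1) / 2 * (m%:R : R)^-1 ^+ 2 = (1 - (m%:R)^-1) / 2.
  by rewrite expr2; field; rewrite gt_eqF.
by rewrite divff ?gt_eqF //; lra.
Qed.

Lemma one_sub_inv_pow_le (m : nat) (c : R) : (1 <= m)%N -> 0 < c ->
  c <= (1 + (m%:R)^-1) ^+ m -> (1 - (m%:R)^-1) ^+ m <= c^-1.
Proof.
move=> m_ge1 c_gt0 c_le; set y := (m%:R : R)^-1.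
have y_ge0 : 0 <= y by rewrite invr_ge0.
have y_le1 : y <= 1 by rewrite invr_le1 ?ler1n ?unitf_gt0 ?ltr0n.
have prod_le1 : (1 - y) ^+ m * (1 + y) ^+ m <= 1.
  by rewrite -exprMn; apply: exprn_ile1; nra.
have lhs_ge0 : 0 <= (1 - y) ^+ m by apply: exprn_ge0; lra.
rewrite -[c^-1]mul1r ler_pdivlMr //.
have := ler_wpM2l lhs_ge0 c_le; lra.
Qed.

Lemma one_sub_inv_pow_le_half (m : nat) : (1 <= m)%N ->
  (1 - (m%:R : R)^-1) ^+ m <= 2^-1.
Proof.
move=> m_ge1; apply: one_sub_inv_pow_le => //.
have := one_add_inv_pow_ge m_ge1.
have : (m%:R : R)^-1 <= 1 by rewrite invr_le1 ?ler1n ?unitf_gt0 ?ltr0n.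
lra.
Qed.

Lemma one_sub_inv_pow_le_5_12 (m : nat) : (5 <= m)%N ->
  (1 - (m%:R : R)^-1) ^+ m <= 5 / 12.
Proof.
move=> m_ge5; have m_ge1 : (1 <= m)%N by lia.
rewrite (_ : 5 / 12 = (12 / 5)^-1); last by field.
have inv_le : (m%:R : R)^-1 <= 5^-1.
  by rewrite lef_pV2 ?posrE ?ltr0n ?(ler_nat R 5 m) //; lia.
apply: one_sub_inv_pow_le => //; first lra.
have := one_add_inv_pow_ge m_ge1; lra.
Qed.

End Bernoulli.

Section USum.
Variable R : realFieldType.

Lemma u_seq_ge0 (n : nat) : (1 <= n)%N -> 0 <= u_seq R n.
Proof.
move=> n_ge1; rewrite /u_seq mulr_ge0 ?invr_ge0 // exprn_ge0 // subr_ge0.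
by rewrite invr_le1 ?unitf_gt0 ?ltr0n ?ler1n //; lia.
Qed.

(* (2n-1) u_n = (1 - 1/(2n))^(2n) <= 1/2: the scale of every term of the u-sum. *)
Lemma u_seq_scaled_le_half (n : nat) : (1 <= n)%N ->
  (2 * n).-1%:R * u_seq R n <= 2^-1.
Proof.
move=> n_ge1; rewrite /u_seq; case def_m: (2 * n)%N => [|m]; first lia.
rewrite /= mulrA.
have -> : (m%:R : R) * (m.+1%:R)^-1 = 1 - (m.+1%:R)^-1.
  by rewrite -natr1; field; rewrite natr1 pnatr_eq0.
by rewrite -exprS one_sub_inv_pow_le_half.
Qed.

Lemma sum_half_pow (n : nat) :
  \sum_(1 <= i < n.+1) (2^-1 : R) ^+ i = 1 - 2^-1 ^+ n.
Proof.
elim: n => [|n IH]; first by rewrite big_geq // expr0 subrr.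
by rewrite big_nat_recr //= IH exprS; lra.
Qed.

Lemma u_sum_lt1 (n : nat) : (1 <= n)%N ->
  \sum_(1 <= i < n.+1) ((2 * i).-1%:R) ^+ (2 * i).-1 * (u_seq R n) ^+ (2 * i).-1 < 1.
Proof.
move=> n_ge1; apply: le_lt_trans (_ : \sum_(1 <= i < n.+1) 2^-1 ^+ i < 1); last first.
  have pow_gt0 : (0 : R) < 2^-1 ^+ n by apply: exprn_gt0; lra.
  by rewrite sum_half_pow; lra.
apply: ler_sum_nat => i /andP[i_ge1 i_le_n]; rewrite -exprMn.
have term_le : (2 * i).-1%:R * u_seq R n <= 2^-1.
  apply: le_trans (u_seq_scaled_le_half n_ge1).
  by rewrite ler_wpM2r ?u_seq_ge0 // ler_nat; lia.
apply: le_trans (_ : 2^-1 ^+ (2 * i).-1 <= _).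
  have term_ge0 : 0 <= (2 * i).-1%:R * u_seq R n by rewrite mulr_ge0 ?u_seq_ge0.
  by apply: lerXn2r; rewrite // nnegrE; lra.
by apply: ler_wiXn2l; [lra | lra | lia].
Qed.

End USum.

Section VSum.
Variable R : realFieldType.

Definition vsum (n : nat) (v : R) : R :=
  \sum_(1 <= i < n.+1) ((2 * i)%:R) ^+ (2 * i).+1 * v ^+ (2 * i).-1.

Lemma vsum_mono (n : nat) (v w : R) : 0 <= v -> v <= w -> vsum n v <= vsum n w.
Proof.
move=> v_ge0 v_le_w; apply: ler_sum => i _.
by rewrite ler_wpM2l ?exprn_ge0 // lerXn2r // nnegrE (le_trans v_ge0).
Qed.

Lemma v_seq_ge0 (n : nat) : 0 <= v_seq R n.
Proof.
rewrite /v_seq mulr_ge0 ?invr_ge0 // exprn_ge0 // subr_ge0.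
by rewrite invr_le1 ?ler1n ?unitf_gt0 ?ltr0n.
Qed.

Lemma vsum_v_seq_lt1 (n : nat) (r : R) :
  v_seq R n <= r -> vsum n r < 1 -> vsum n (v_seq R n) < 1.
Proof. by move=> v_le_r; apply: le_lt_trans (vsum_mono n (v_seq_ge0 n) v_le_r). Qed.

Definition vmajor (i : nat) : R := (2 * i)%:R ^+ 3 * (5 / 12) ^+ (2 * i).-1.

Lemma vmajor_ge0 (i : nat) : 0 <= vmajor i.
Proof. by rewrite /vmajor mulr_ge0 ?exprn_ge0 //; lra. Qed.

(* From i = 5 on the majorants decrease at least by a factor 3, since
   (1 + 1/i)^3 (5/12)^2 <= 1/3 for i >= 5. *)
Lemma vmajor_step (i : nat) : (5 <= i)%N -> vmajor i.+1 <= vmajor i / 3.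
Proof.
move=> i_ge5; rewrite /vmajor.
have -> : ((2 * i.+1).-1 = 2 + (2 * i).-1)%N by lia.
have -> : (2 * i.+1)%:R = 2 * (i%:R : R) + 2 by rewrite natrM -natr1; ring.
rewrite exprD natrM.
have I_ge5 : (5 : R) <= i%:R by rewrite (ler_nat R 5 i).
set X := (5 / 12 : R) ^+ (2 * i).-1; set I := (i%:R : R).
have X_ge0 : 0 <= X by apply: exprn_ge0; lra.
have cubic : 25 * (I + 1) ^+ 3 <= 48 * I ^+ 3.
  have : 0 <= (I - 5) * (23 * I ^+ 2 + 40 * I + 125) by apply: mulr_ge0; nra.
  rewrite !expr2 !exprS expr0; nra.
have : 0 <= X * (48 * I ^+ 3 - 25 * (I + 1) ^+ 3) by apply: mulr_ge0; lra.
rewrite !exprS expr0; nra.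
Qed.

(* Invariant of the geometric decay: S_k + b_k / 2 does not increase from
   k = 5 on, where it is already below 62/5 (S_k = partial sum up to k). *)
Lemma vmajor_sum_invariant (k : nat) :
  \sum_(1 <= i < (k + 5).+1) vmajor i + vmajor (k + 5) / 2 <= 62 / 5.
Proof.
elim: k => [|k IH].
  rewrite /vmajor; do 5 rewrite big_nat_recr //; rewrite big_geq //=.
  lra.
rewrite addSn big_nat_recr //=.
have := vmajor_step (leq_addl k 5); have := vmajor_ge0 (k + 5); lra.
Qed.

Lemma vmajor_sum_le (n : nat) : (5 <= n)%N ->
  \sum_(1 <= i < n.+1) vmajor i <= 62 / 5.
Proof.
move=> n_ge5; have := vmajor_sum_invariant (n - 5); rewrite subnK //.
have := vmajor_ge0 n; lra.
Qed.

Lemma vterm_le (J a p v : R) (j : nat) : (2 <= j)%N ->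
  0 < p -> 0 <= v -> v <= p^-1 * a -> 0 <= a -> 0 <= J -> J <= p ->
  J ^+ j.+1 * v ^+ j.-1 <= J ^+ 3 * a ^+ j.-1 * p^-1.
Proof.
case: j => [|[|e]] // _ p_gt0 v_ge0 v_le a_ge0 J_ge0 J_le_p.
have inv_ge0 : 0 <= p^-1 by rewrite invr_ge0 ltW.
apply: le_trans (_ : J ^+ e.+3 * (p^-1 * a) ^+ e.+1 <= _).
  apply: ler_wpM2l; first exact: exprn_ge0.
  by apply: lerXn2r; rewrite // nnegrE mulr_ge0.
have -> : J ^+ e.+3 * (p^-1 * a) ^+ e.+1 = J ^+ 3 * a ^+ e.+1 * p^-1 * (J / p) ^+ e.
  by rewrite -addn3 exprD !exprS !exprMn exprVn; field; rewrite expf_neq0 ?gt_eqF.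
have ratio_pow_le1 : (J / p) ^+ e <= 1.
  apply: exprn_ile1; first by apply: divr_ge0 => //; apply: ltW.
  by rewrite ler_pdivrMr // mul1r.
have coef_ge0 : 0 <= J ^+ 3 * a ^+ e.+1 * p^-1 by rewrite !mulr_ge0 ?exprn_ge0.
by have := ler_wpM2l coef_ge0 ratio_pow_le1; rewrite mulr1.
Qed.

(* Second inequality for n >= 6: vsum n v_n <= (sum of majorants)/p <= (62/5)/13. *)
Lemma vsum_lt1_large (n : nat) : (6 <= n)%N -> vsum n (v_seq R n) < 1.
Proof.
move=> n_ge6; set p := (2 * n).+1.
have p_gt0 : (0 : R) < p%:R by rewrite ltr0n.
have v_le : v_seq R n <= p%:R^-1 * (5 / 12).
  apply: ler_wpM2l; first by rewrite invr_ge0 ltW.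
  by apply: one_sub_inv_pow_le_5_12; lia.
apply: le_lt_trans (_ : \sum_(1 <= i < n.+1) vmajor i * p%:R^-1 < 1).
  apply: ler_sum_nat => i /andP[i_ge1 i_le_n].
  apply: vterm_le; rewrite ?v_seq_ge0 ?ler_nat //; try lia; lra.
have p_ge13 : (13 : R) <= p%:R by rewrite (ler_nat R 13 p); lia.
have sum_le : \sum_(1 <= i < n.+1) vmajor i <= 62 / 5 by apply: vmajor_sum_le; lia.
rewrite -mulr_suml ltr_pdivrMr // mul1r; lra.
Qed.

Ltac v_seq_le_rational :=
  rewrite /v_seq ?mul1n ?mul2n ?doubleS ?double0 /=;
  match goal with |- context [1 - (?x%:R)^-1] =>
    rewrite (_ : 1 - (x%:R)^-1 = (x%:R - 1) / x%:R); last by field end;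
  lra.

Ltac vsum_rational_lt1 :=
  rewrite /vsum; repeat (rewrite big_nat_recr; last done); rewrite big_geq //=;
  rewrite ?mul1n ?mul2n ?doubleS ?double0 /=; lra.

Lemma vsum_lt1_small (n : nat) : (1 <= n)%N -> (n <= 5)%N ->
  vsum n (v_seq R n) < 1.
Proof.
case: n => [|[|[|[|[|[|n]]]]]] // _ _.
- by apply: (@vsum_v_seq_lt1 1 (99/1000)); [v_seq_le_rational | vsum_rational_lt1].
- by apply: (@vsum_v_seq_lt1 2 (41/625)); [v_seq_le_rational | vsum_rational_lt1].
- by apply: (@vsum_v_seq_lt1 3 (243/5000)); [v_seq_le_rational | vsum_rational_lt1].
- by apply: (@vsum_v_seq_lt1 4 (77/2000)); [v_seq_le_rational | vsum_rational_lt1].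
- by apply: (@vsum_v_seq_lt1 5 (4/125)); [v_seq_le_rational | vsum_rational_lt1].
Qed.

End VSum.

Theorem lemma8p5 (R : realFieldType) (n : nat) (hn : (1 <= n)%N) :
  \sum_(1 <= i < n.+1) ((2 * i).-1%:R) ^+ (2 * i).-1 * (u_seq R n) ^+ (2 * i).-1 < 1
  /\
  \sum_(1 <= i < n.+1) ((2 * i)%:R) ^+ (2 * i).+1 * (v_seq R n) ^+ (2 * i).-1 < 1.
Proof.
split; first exact: u_sum_lt1.
have [n_le5 | n_ge6] := leqP n 5.
- exact: vsum_lt1_small.
- exact: vsum_lt1_large.
Qed.
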